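(* The loose integration $(\mathcal A,U,\varphi)$ of $m$ symmetric qualitative formalisms $(\mathcal A_1,U,\varphi_1),\dots,(\mathcal A_m,U,\varphi_m)$ over the same set $U$ is a sequential formalism.
   Context: A finite non-associative algebra is a tuple $(\mathcal A,\cup,\neg,\emptyset,\mathcal B,\diamond,\overline{\cdot},e)$ where $(\mathcal A,\cup,\neg,\emptyset,\mathcal B)$ is a finite Boolean algebra (with $x\cap y=\neg(\neg x\cup\neg y)$) and for all $x,y,z$: $\overline{\overline x}=x$, $\overline{x\cup y}=\overline x\cup\overline y$, $\overline{x\diamond y}=\overline y\diamond\overline x$, $e\diamond x=x\diamond e=x$, $x\diamond(y\cup z)=(x\diamond y)\cup(x\diamond z)$, $(x\diamond y)\cap\overline z=\emptyset\iff(y\diamond z)\cap\overline x=\emptyset$. $\mathcal B$ is the universal relation; $r\subseteq r'$ means $r\cup r'=r'$; atoms are the basic relations; $\mathsf B$ denotes the set of atoms. A symmetric qualitative formalism is a triple $(\mathcal A,U,\varphi)$ with $\mathcal A$ a finite non-associative algebra, $U\neq\emptyset$ and $\varphi:\mathcal A\to2^{U\times U}$ with $\varphi(\emptyset)=\emptyset$, $\varphi(\overline r)=\varphi(r)^{-1}$, $\varphi(r\cap r')=\varphi(r)\cap\varphi(r')$, $\varphi(r\cup r')=\varphi(r)\cup\varphi(r')$, $\varphi(r\diamond r')\supseteq(\varphi(r)\circ\varphi(r'))\cap\varphi(\mathcal B)$. A projection operator from $\mathcal A$ to $\mathcal A'$ is a map $\Rsh$ with $\Rsh(r\cup r')=\Rsh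 r\cup\Rsh r'$ and $\Rsh\overline r=\overline{\Rsh r}$. A finite multi-algebra is a product $\mathcal A_1\times\cdots\times\mathcal A_m$ of finite non-associative algebras with projection operators $\Rsh_i^j:\mathcal A_i\to\mathcal A_j$ for all distinct $i,j$. Relations $R=(R_1,\dots,R_m)$; basic if all $R_i$ are atoms; universal relation $\mathcal B=(\mathcal B_1,\dots,\mathcal B_m)$; operations and $\subseteq$ componentwise; $B\in R$ means $B$ basic, $B\subseteq R$. The projection closure $\Rsh R$: repeatedly replace $R_j$ by $R_j\cap\Rsh_i^jR_i$ until a fixed point. A sequential formalism is $(\mathcal A,U,\varphi)$ with $\mathcal A$ a finite multi-algebra, $U\ne\emptyset$, $\varphi:\mathcal A\to 2^{U\times U}$ satisfying $\varphi(\Rsh R)=\varphi(R)$, $\varphi(\overline R)=\varphi(R)^{-1}$, $\varphi((\emptyset,\dots,\emptyset))=\emptyset$, $\varphi(R\diamond R')\supseteq(\varphi(R)\circ\varphi(R'))\cap\varphi(\mathcal B)$, $\varphi(R\cap R')=\varphi(R)\cap\varphi(R')$, $\varphi(R)=\bigcup_{B\in R}\varphi(B)$. The loose integration of $(\mathcal A_1,U,\varphi_1),\dots,(\mathcal A_m,U,\varphi_m)$ is $(\mathcal A,U,\varphi)$ where $\mathcal A$ is the multi-algebra $\mathcal A_1\times\cdots\times\mathcal A_m$ with projections defined on atoms $b\in\mathsf B_i$ by $\Rsh_i^jb=\bigcup\{b'\in\mathsf B_j:\varphi_i(b)\cap\varphi_j(b')\neq\emptyset\}$ (extended to all relations by union),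 and $\varphi(R)=\bigcap_i\varphi_i(R_i)$. *)

(* Finite Boolean algebras are MathComp's finite complemented
   distributive lattices with top and bottom (finCTBDistrLatticeType). *)
From mathcomp Require Import all_boot all_order.
From mathcomp Require Import boolp.
From Stdlib Require Import Relations.Relation_Operators.

Set Implicit Arguments.
Unset Strict Implicit.
Unset Printing Implicit Defensive.

Import Order.TTheory.
Local Open Scope order_scope.

Record nalgebra := NAlgebra {
  na_disp : Order.disp_t;
  na_sort :> finCTBDistrLatticeType na_disp;
  na_conv : na_sort -> na_sort;
  na_comp : na_sort -> na_sort -> na_sort;
  na_e : na_sort;
  na_convK : forall x, na_conv (na_conv x) = x;
  na_convU : forall x y, na_conv (x `|` y) = na_conv x `|` na_conv y;
  na_convM : forall x y, na_conv (na_comp x y) = na_comp (na_conv y) (na_conv x);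
  na_e_l : forall x, na_comp na_e x = x;
  na_e_r : forall x, na_comp x na_e = x;
  na_compU : forall x y z, na_comp x (y `|` z) = na_comp x y `|` na_comp x z;
  na_cycle : forall x y z,
    ~` (~` (na_comp x y) `|` ~` (na_conv z)) = \bot <->
    ~` (~` (na_comp y z) `|` ~` (na_conv x)) = \bot
}.

Section Ops.
Variable A : nalgebra.
Definition ncup (x y : A) : A := x `|` y.
Definition nneg (x : A) : A := ~` x.
Definition nempty : A := \bot.
Definition nuniv : A := \top.
Definition ncap (x y : A) : A := nneg (ncup (nneg x) (nneg y)).
Definition nsub (x y : A) : Prop := ncup x y = y.
Definition atom (x : A) : Prop :=
  x <> nempty /\ forall y : A, nsub y x -> y = nempty \/ y = x.
End Ops.

Definition brel (U : Type) := U -> U -> Prop.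
Definition req U (P Q : brel U) := forall u v, P u v <-> Q u v.
Definition rsub U (P Q : brel U) := forall u v, P u v -> Q u v.
Definition rempty U : brel U := fun _ _ => False.
Definition rinv U (P : brel U) : brel U := fun u v => P v u.
Definition rcap U (P Q : brel U) : brel U := fun u v => P u v /\ Q u v.
Definition rcup U (P Q : brel U) : brel U := fun u v => P u v \/ Q u v.
Definition rcomp U (P Q : brel U) : brel U := fun u w => exists v, P u v /\ Q v w.

Definition sym_qual_formalism (A : nalgebra) (U : Type) (phi : A -> brel U) : Prop :=
  inhabited U /\
  req (phi (nempty A)) (@rempty U) /\
  (forall r, req (phi (na_conv r)) (rinv (phi r))) /\
  (forall r r', req (phi (ncap r r')) (rcap (phi r) (phi r'))) /\
  (forall r r', req (phi (ncup r r')) (rcup (phi r) (phi r'))) /\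
  (forall r r', rsub (rcap (rcomp (phi r) (phi r')) (phi (nuniv A)))
                     (phi (na_comp r r'))).

Definition projection_op (A A' : nalgebra) (p : A -> A') : Prop :=
  (forall r r', p (ncup r r') = ncup (p r) (p r')) /\
  (forall r, p (na_conv r) = na_conv (p r)).

Section Multi.
Variables (m : nat) (A : 'I_m -> nalgebra).
(* proj i j : projection operator from A_i to A_j (used only for i != j) *)
Definition projs := forall i j : 'I_m, A i -> A j.
Definition mrel := forall i : 'I_m, A i.

Definition finite_multialgebra (proj : projs) : Prop :=
  forall i j, i != j -> projection_op (proj i j).

Definition mcap (R R' : mrel) : mrel := fun i => ncap (R i) (R' i).
Definition mconv (R : mrel) : mrel := fun i => na_conv (R i).
Definition mcomp (R R' : mrel) : mrel := fun i => na_comp (R i) (R' i).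
Definition mempty : mrel := fun i => nempty (A i).
Definition muniv : mrel := fun i => nuniv (A i).
Definition msub (R R' : mrel) : Prop := forall i, nsub (R i) (R' i).
Definition mbasic (R : mrel) : Prop := forall i, atom (R i).

Definition proj_step (proj : projs) (R R' : mrel) : Prop :=
  exists i j, [/\ i != j, R' j = ncap (R j) (proj i j (R i)) &
                  forall k, k != j -> R' k = R k].
Definition proj_fixed (proj : projs) (R : mrel) : Prop :=
  forall i j, i != j -> ncap (R j) (proj i j (R i)) = R j.
Definition proj_closure (proj : projs) (R R' : mrel) : Prop :=
  clos_refl_trans mrel (proj_step proj) R R' /\ proj_fixed proj R'.

Definition sequential_formalism (proj : projs) (U : Type) (phi : mrel -> brel U)
  : Prop :=
  finite_multialgebra proj /\
  inhabited U /\
  (forall R R', proj_closure proj R R' -> req (phi R') (phi R)) /\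
  (forall R, req (phi (mconv R)) (rinv (phi R))) /\
  req (phi mempty) (@rempty U) /\
  (forall R R', rsub (rcap (rcomp (phi R) (phi R')) (phi muniv))
                     (phi (mcomp R R'))) /\
  (forall R R', req (phi (mcap R R')) (rcap (phi R) (phi R'))) /\
  (forall R, req (phi R) (fun u v => exists B, [/\ mbasic B, msub B R & phi B u v])).

Variables (U : Type) (phis : forall i, A i -> brel U).

Definition loose_proj_atom (i j : 'I_m) (b : A i) : A j :=
  \join_(b' : A j | `[< atom b' /\ exists u v, phis b u v /\ phis b' u v >]) b'.
Definition loose_proj : projs := fun i j r =>
  \join_(b : A i | `[< atom b /\ nsub b r >]) @loose_proj_atom i j b.
Definition loose_phi : mrel -> brel U := fun R u v => forall i, phis (R i) u v.
End Multi.

(* Any pair related by [phi r] in a symmetric qualitative formalism is already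
   related by some atom [b <= r].  So if [(u, v)] lies in [phi_i r] and in
   [phi_j s], there are atoms [b <= r] and [c <= s] containing it, whence
   [c <= proj_i^j b <= proj_i^j r]: intersecting [R_j] with [proj_i^j R_i]
   never changes [loose_phi R], and neither does the projection closure.
   The loose projections, being joins over atoms, preserve unions because
   atoms are join-prime, and preserve converses because the converse maps
   atoms to atoms and reverses the witnessing pairs. *)

From mathcomp Require Import all_boot all_order boolp.

Set Implicit Arguments.
Unset Strict Implicit.
Unset Printing Implicit Defensive.

Import Order.Theory.
Local Open Scope order_scope.

Lemma finPOrder_lt_ind d (T : finPOrderType d) (P : T -> Prop) :
  (forall x, (forall y, y < x -> P y) -> P x) -> forall x, P x.
Proof.
move=> IH x; have [n] := ubnP #|[pred y | y < x]|.
elim: n x => // n IHn x; rewrite ltnS => card_x_le.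
apply: IH => y lt_yx; apply: IHn; apply: leq_trans card_x_le.
apply: proper_card; apply/properP; split.
  by apply/subsetP => z; rewrite !inE => /lt_trans; apply.
by exists y; rewrite !inE ?lt_yx // ltxx.
Qed.

Section NAlgebraTheory.
Variable A : nalgebra.
Implicit Types x y b r : A.

Lemma nsubE x y : nsub x y <-> x <= y.
Proof. by rewrite /nsub /ncup leEjoin; split => [->|/eqP]. Qed.

Lemma conv_mono x y : x <= y -> na_conv x <= na_conv y.
Proof. by rewrite !leEjoin -na_convU => /eqP ->. Qed.

Lemma le_conv x y : (na_conv x <= na_conv y) = (x <= y).
Proof. by apply/idP/idP => [/conv_mono|/conv_mono //]; rewrite !na_convK. Qed.

Lemma conv0 : na_conv \bot = \bot :> A.
Proof. by apply/le_anti; rewrite le0x -le_conv na_convK le0x. Qed.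

Lemma atom_conv b : atom b -> atom (na_conv b).
Proof.
move=> [b_neq0 b_min]; split.
  by move=> b'0; apply: b_neq0; rewrite -[b]na_convK b'0 /nempty conv0.
move=> y /nsubE; rewrite -le_conv na_convK => /nsubE /b_min [y'0|<-].
  by left; rewrite -[y]na_convK y'0 /nempty conv0.
by right; rewrite na_convK.
Qed.

Lemma atom_leU b x y : atom b -> b <= x `|` y -> b <= x \/ b <= y.
Proof.
move=> [_ b_min] le_b_xy.
have b_split : b = (b `&` x) `|` (b `&` y) by rewrite -meetUr (meet_l le_b_xy).
have /nsubE/b_min [bx0|bxb] := leIl b x.
  by right; rewrite b_split bx0 /nempty join0x leIr.
by left; rewrite -bxb leIr.
Qed.

Lemma not_atom_split r : r != \bot -> ~ atom r -> exists2 y, y != \bot & y < r.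
Proof.
move=> /eqP r_neq0 not_atom; apply: contra_notP not_atom => no_split.
split=> // y /nsubE le_yr.
have [/eqP y0|y_neq0] := boolP (y == \bot); first by left.
right; apply: contra_notP no_split => /eqP y_neq_r.
by exists y; rewrite // lt_neqAle y_neq_r.
Qed.

End NAlgebraTheory.

Section SymQualFormalismTheory.
Variables (A : nalgebra) (U : Type) (phi : A -> brel U).
Hypothesis phi_sqf : sym_qual_formalism phi.
Implicit Types r : A.

Lemma phi0 u v : ~ phi \bot u v.
Proof. by case: phi_sqf => _ [phi_empty _] /phi_empty. Qed.

Lemma phiV r u v : phi (na_conv r) u v <-> phi r v u.
Proof. by case: phi_sqf => _ [_ [phi_conv _]]; apply: phi_conv. Qed.

Lemma phiI r r' u v : phi (ncap r r') u v <-> phi r u v /\ phi r' u v.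
Proof. by case: phi_sqf => _ [_ [_ [phi_cap _]]]; apply: phi_cap. Qed.

Lemma phiU r r' u v : phi (r `|` r') u v <-> phi r u v \/ phi r' u v.
Proof. by case: phi_sqf => _ [_ [_ [_ [phi_cup _]]]]; apply: phi_cup. Qed.

Lemma phi_comp r r' :
  rsub (rcap (rcomp (phi r) (phi r')) (phi (nuniv A))) (phi (na_comp r r')).
Proof. by case: phi_sqf => _ [_ [_ [_ [_ phi_comp]]]]. Qed.

Lemma phi_mono r r' : r <= r' -> rsub (phi r) (phi r').
Proof. by move=> /join_idPr <- u v phi_r; apply/phiU; left. Qed.

(* A nonzero non-atom is the join of two strictly smaller elements, one of
   which carries the pair. *)
Lemma phi_atom_witness r u v :
  phi r u v -> exists b, [/\ atom b, b <= r & phi b u v].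
Proof.
elim/finPOrder_lt_ind: r => r IH phi_r.
have [r0|r_neq0] := eqVneq r \bot; first by move: phi_r; rewrite r0 => /phi0.
have [r_atom|/(not_atom_split r_neq0) [y y_neq0 lt_yr]] := pselect (atom r).
  by exists r.
have lt_ry_r : r `\` y < r.
  rewrite lt_neqAle leBx andbT; apply: contra y_neq0 => /eqP ry_r.
  by rewrite -(diffKI r y) ry_r (meet_l (ltW lt_yr)).
have [z lt_zr phi_z] : exists2 z, z < r & phi z u v.
  move: phi_r; rewrite -[in phi r](joinBI y r) (meet_r (ltW lt_yr)) => /phiU [].
    by exists (r `\` y).
  by exists y.
have [b [b_atom le_bz phi_b]] := IH z lt_zr phi_z.
by exists b; split=> //; apply: le_trans le_bz (ltW lt_zr).
Qed.

End SymQualFormalismTheory.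

Section LooseIntegration.
Variables (m : nat) (A : 'I_m -> nalgebra) (U : Type).
Variable phis : forall i : 'I_m, A i -> brel U.

Local Notation proj := (loose_proj phis).
Local Notation proj_atom := (loose_proj_atom phis).
Local Notation phi := (loose_phi phis).

Lemma le_loose_proj_atom i j (b : A i) (c : A j) u v :
  atom c -> phis b u v -> phis c u v -> c <= proj_atom j b.
Proof.
move=> c_atom phi_b phi_c; apply: (joins_sup id).
by apply/asboolP; split; last exists u, v.
Qed.

Lemma loose_proj_atom_le i j (b : A i) (x : A j) :
  (forall (c : A j) u v, atom c -> phis b u v -> phis c u v -> c <= x) ->
  proj_atom j b <= x.
Proof.
by move=> ub; apply/joinsP => c /asboolP [c_atom [u [v []]]]; apply: ub.
Qed.

Lemma le_loose_proj i j (b r : A i) :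
  atom b -> b <= r -> proj_atom j b <= proj j r.
Proof.
move=> b_atom le_br; apply: (joins_sup (proj_atom j)).
exact/asboolP/(conj b_atom)/nsubE.
Qed.

Lemma loose_proj_le i j (r : A i) (x : A j) :
  (forall b : A i, atom b -> b <= r -> proj_atom j b <= x) -> proj j r <= x.
Proof. by move=> ub; apply/joinsP => b /asboolP [b_atom /nsubE]; apply: ub. Qed.

Lemma loose_proj_mono i j (r r' : A i) : r <= r' -> proj j r <= proj j r'.
Proof.
move=> le_rr'; apply: loose_proj_le => b b_atom le_br.
by apply: le_loose_proj; last apply: le_trans le_rr'.
Qed.

Lemma loose_projU i j (r r' : A i) : proj j (r `|` r') = proj j r `|` proj j r'.
Proof.
apply/le_anti/andP; split; last by rewrite leUx !loose_proj_mono ?leUl ?leUr.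
apply: loose_proj_le => b b_atom /(atom_leU b_atom) [le_br|le_br'].
  by apply: le_trans (leUl _ _); apply: le_loose_proj.
by apply: le_trans (leUr _ _); apply: le_loose_proj.
Qed.

Hypothesis phis_sqf : forall i, sym_qual_formalism (@phis i).

Lemma loose_projV_le i j (r : A i) : proj j (na_conv r) <= na_conv (proj j r).
Proof.
apply: loose_proj_le => b b_atom le_b_rV.
apply: loose_proj_atom_le => c u v c_atom phi_b phi_c.
have phi_bV : phis (na_conv b) v u by apply/(phiV (phis_sqf i)).
have phi_cV : phis (na_conv c) v u by apply/(phiV (phis_sqf j)).
have le_bV_r : na_conv b <= r by rewrite -le_conv na_convK.
rewrite -le_conv na_convK.
apply: le_trans (le_loose_proj_atom (atom_conv c_atom) phi_bV phi_cV) _.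
exact: le_loose_proj (atom_conv b_atom) le_bV_r.
Qed.

Lemma loose_projV i j (r : A i) : proj j (na_conv r) = na_conv (proj j r).
Proof.
apply/le_anti/andP; split; first exact: loose_projV_le.
by have := loose_projV_le j (na_conv r); rewrite -le_conv !na_convK.
Qed.

Lemma loose_proj_multialgebra : finite_multialgebra proj.
Proof.
by move=> i j _; split=> r; [apply: loose_projU | apply: loose_projV].
Qed.

Lemma phis_loose_proj i j (r : A i) (s : A j) u v :
  phis r u v -> phis s u v -> phis (proj j r) u v.
Proof.
move=> /(phi_atom_witness (phis_sqf i)) [b [b_atom le_br phi_b]].
move=> /(phi_atom_witness (phis_sqf j)) [c [c_atom _ phi_c]].
have le_c_proj : c <= proj j r.
  apply: le_trans (le_loose_proj_atom c_atom phi_b phi_c) _.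
  exact: le_loose_proj b_atom le_br.
exact: (phi_mono (phis_sqf j) le_c_proj phi_c).
Qed.

Lemma loose_phi_proj_step R R' : proj_step proj R R' -> req (phi R') (phi R).
Proof.
case=> i [j [_ R'_j R'_other]] u v; split=> phi_R k.
  have [->|/R'_other <-] := eqVneq k j; last exact: phi_R.
  by have := phi_R j; rewrite R'_j => /(phiI (phis_sqf j)) [].
have [->|/R'_other ->] := eqVneq k j; last exact: phi_R.
rewrite R'_j; apply/(phiI (phis_sqf j)); split; first exact: phi_R.
exact: phis_loose_proj (phi_R i) (phi_R j).
Qed.

Lemma loose_phi_proj_closure R R' :
  proj_closure proj R R' -> req (phi R') (phi R).
Proof.
case=> + _; elim=> [R1 R2 /loose_phi_proj_step //|R1 u v //|].
by move=> R1 R2 R3 _ IH12 _ IH23 u v; rewrite IH23 IH12.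
Qed.

Lemma loose_phiV R : req (phi (mconv R)) (rinv (phi R)).
Proof. by move=> u v; split=> phi_R i; apply/(phiV (phis_sqf i)). Qed.

Lemma loose_phi0 : 0 < m -> req (phi (mempty A)) (@rempty U).
Proof. by move=> m_gt0 u v; split=> [/(_ (Ordinal m_gt0))|[]]; apply: phi0. Qed.

Lemma loose_phi_comp R R' :
  rsub (rcap (rcomp (phi R) (phi R')) (phi (muniv A))) (phi (mcomp R R')).
Proof.
move=> u w [[v [phi_R phi_R']] phi_univ] i.
apply: (phi_comp (phis_sqf i)); split; last exact: phi_univ.
by exists v; split; [apply: phi_R | apply: phi_R'].
Qed.

Lemma loose_phiI R R' : req (phi (mcap R R')) (rcap (phi R) (phi R')).
Proof.
move=> u v; split=> [phi_RR'|[phi_R phi_R'] i]; last exact/(phiI (phis_sqf i)).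
by split=> i; have /(phiI (phis_sqf i)) [] := phi_RR' i.
Qed.

Lemma loose_phi_basic R :
  req (phi R) (fun u v => exists B, [/\ mbasic B, msub B R & phi B u v]).
Proof.
move=> u v; split=> [phi_R|[B [_ le_BR phi_B]] i]; last first.
  exact: (phi_mono (phis_sqf i) (iffLR (nsubE _ _) (le_BR i)) (phi_B i)).
have witness i := phi_atom_witness (phis_sqf i) (phi_R i).
exists (fun i => projT1 (cid (witness i))).
by split=> i; case: (projT2 (cid (witness i))) => // _ /nsubE.
Qed.
End LooseIntegration.

Local Close Scope order_scope.

Theorem proposition4p17 (m : nat) (m_gt0 : 0 < m) (A : 'I_m -> nalgebra)
  (U : Type) (phis : forall i : 'I_m, A i -> brel U) :
  (forall i, sym_qual_formalism (phis i)) ->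
  sequential_formalism (loose_proj phis) (loose_phi phis).
Proof.
move=> phis_sqf; split; first exact: loose_proj_multialgebra.
split; first by case: (phis_sqf (Ordinal m_gt0)).
split; first by move=> R R' /(loose_phi_proj_closure phis_sqf).
split; first exact: loose_phiV.
split; first exact: loose_phi0.
split; first exact: loose_phi_comp.
split; first exact: loose_phiI.
exact: loose_phi_basic.
Qed.
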